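(* Let $D$ be an $m$-Dyck path of order $\ell$. The frieze pattern $F_{\mathsf{rtn}(D)}$ satisfies \[ F_{\mathsf{rtn}(D)}(i-1,i+1) = (\text{up}_D(i) + \text{bal}_D(i)+1) \lambda_{m+2} \] for all $0 \leq i \leq m\ell + 1$.
   Context: An $m$-Dyck path of order $\ell$ is a lattice path of up steps $(0,1)$ and right steps $(1,0)$ from $(0,0)$ to $(m\ell,\ell)$ staying above the line $y = x/m$. A lattice point of the path is a corner if it is incident to both an up step and a right step; otherwise it is a non-corner. The balance lines of $D$ form a multiset of $\ell-1$ lines of slope $1/m$, one through the lowest point of each up step except the first up step. A balance line starting at $(i,i')$ whose first intersection with a non-corner point of $D$ is at $(j,j')$ is labeled $(i,j+1)$. The map $\mathsf{rtn}$ sends $D$ to the $(m+2)$-angulation of the polygon $P_{m\ell+2}$ (vertices $v_0,\ldots,v_{m\ell+1}$ labeled clockwise) consisting of the diagonals $(v_i,v_j)$ for all labels $(i,j)$ of balance lines of $D$. For $0 \le i \le m\ell+1$, $\text{up}_D(i)$ is the number of up steps of the form $(i,j)-(i,j+1)$ with $j>0$ in $D$, and $\text{bal}_D(i)$ is the number of balance lines whose first intersection with a non-corner point of $D$ is at a point $(i-1,j)$. $\lambda_p = 2\cos(\pi/p)$. For a dissection $T$ of a polygon $P_N$, $F_T$ is the (finite) frieze pattern — a function $F$ on $\{(i,j): 0 \le j-i \le N\}$ with $F(i,i)=F(i,i+N)=0$, $F(i,i+1)=F(i,i+N-1)=1$, and $F(i-1,j)F(i,j+1)-F(i,j)F(i+1,j+1)=1$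 — determined by the quiddity row $F_T(i-1,i+1)=\sum_{p\ge 3}\mu_p(\overline{i})\lambda_p$, where $\mu_p(\overline{i})$ is the number of $p$-gons of $T$ incident to the vertex $v_{i \bmod N}$. *)

From HB Require Import structures.
From mathcomp Require Import all_boot all_order all_algebra.
From mathcomp Require Import reals trigo.
Set Implicit Arguments. Unset Strict Implicit. Unset Printing Implicit Defensive.
Import Order.TTheory GRing.Theory Num.Theory.

(* m-Dyck paths.  A path is a sequence of steps: true = up step (0,1),    *)
(* false = right step (1,0).  Step k goes from point k to point k.+1.     *)
Definition n_up (s : seq bool) : nat := count id s.
Definition n_right (s : seq bool) : nat := count negb s.

(* D goes from (0,0) to (m*l, l) and stays (weakly) above y = x/m,       *)
Definition is_mDyck (m l : nat) (D : seq bool) : bool :=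
  [&& n_up D == l, n_right D == m * l &
      all (fun k => n_right (take k D) <= m * n_up (take k D))
          (iota 0 (size D).+1)].

Definition pt (D : seq bool) (k : nat) : nat * nat :=
  (n_right (take k D), n_up (take k D)).

(* point k is a corner iff it is incident to both an up and a right step *)
Definition is_corner (D : seq bool) (k : nat) : bool :=
  [&& 0 < k, k < size D & nth false D k.-1 != nth false D k].

(* (x,y) is a lattice point of D (necessarily the point number x+y) *)
Definition on_path (D : seq bool) (x y : nat) : bool :=
  (x + y <= size D) && (pt D (x + y) == (x, y)).

Definition noncorner_at (D : seq bool) (x y : nat) : bool :=
  on_path D x y && ~~ is_corner D (x + y).

(* Balance line through the lowest point (i,i') = pt D k of the up step k: *)
(* its lattice points to the right are (i + m t, i' + t), t >= 1.  The     *)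
(* first one that is a non-corner point of D is (j, j') with j = i + m t;  *)
(* the line is labelled (i, j+1).                                          *)
Definition bal_t (m : nat) (D : seq bool) (k : nat) : nat :=
  let: (i, i') := pt D k in
  (find (fun t => noncorner_at D (i + m * t) (i' + t)) (iota 1 (size D))).+1.

Definition bal_label (m : nat) (D : seq bool) (k : nat) : nat * nat :=
  let: (i, _) := pt D k in (i, (i + m * bal_t m D k).+1).

Definition nonfirst_ups (D : seq bool) : seq nat :=
  [seq k <- iota 0 (size D) | nth false D k && (find id D < k)].

Definition bal_labels (m : nat) (D : seq bool) : seq (nat * nat) :=
  [seq bal_label m D k | k <- nonfirst_ups D].

Definition up_D (D : seq bool) (i : nat) : nat :=
  count (fun k => [&& nth false D k, (pt D k).1 == i & 0 < (pt D k).2])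
        (iota 0 (size D)).

(* bal_D(i): balance lines whose first non-corner intersection is at      *)
(* a point (i-1, j), i.e. whose label has second component i.             *)
Definition bal_D (m : nat) (D : seq bool) (i : nat) : nat :=
  count (fun lab : nat * nat => lab.2 == i) (bal_labels m D).

(* rtn(D): the set of diagonals (v_i, v_j), (i,j) a label of D, given as  *)
(* a symmetric relation on vertex indices.                                *)
Definition rtn (m : nat) (D : seq bool) : rel nat :=
  fun a b => ((a, b) \in bal_labels m D) || ((b, a) \in bal_labels m D).

(* Dissections of the polygon P_N with vertices v_0, ..., v_{N-1}         *)
(* (clockwise), given by a relation dg of diagonals.                      *)
Definition cdist (N a b : nat) : nat := (b + N - a) %% N.

Definition strictly_between (N a b c : nat) : bool :=
  (0 < cdist N a c) && (cdist N a c < cdist N a b).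

Definition is_side (N : nat) (S : {set 'I_N}) (a b : 'I_N) : bool :=
  [&& a \in S, b \in S, a != b &
      [forall c in S, ~~ strictly_between N a b c]].

Definition boundary_edge (N a b : nat) : bool :=
  (b == a.+1 %% N) || (a == b.+1 %% N).

(* S is (the vertex set of) a piece of the dissection: a polygon with at   *)
(* least 3 vertices, all of whose sides are edges of P_N or diagonals of   *)
(* the dissection, and which is not cut by any diagonal.                   *)
Definition is_piece (N : nat) (dg : rel nat) (S : {set 'I_N}) : bool :=
  [&& 2 < #|S|,
      [forall a, forall b,
          is_side S a b ==> (boundary_edge N a b || dg a b)] &
      [forall x : 'I_N, forall y : 'I_N, dg x y ==>
          ~~ [exists c in S, exists d in S,
                strictly_between N x y c && strictly_between N y x d]]].

Definition mu (N : nat) (dg : rel nat) (p v : nat) : nat :=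
  #|[set S : {set 'I_N} | [&& is_piece dg S, #|S| == p &
                              [exists x in S, val x == v %% N]]]|.

Section Frieze.
Variable R : realType.
Local Open Scope ring_scope.

Definition lambda (p : nat) : R := 2 * cos (pi / p%:R).

Definition quiddity (N : nat) (dg : rel nat) (i : int) : R :=
  \sum_(3 <= p < N.+1) (mu N dg p (absz (i %% Posz N)%Z))%:R * lambda p.

(* Frieze determined by the quiddity row c, via the standard recurrence   *)
(* F(i,i) = 0, F(i,i+1) = 1, F(i,j+1) = c(j) F(i,j) - F(i,j-1);           *)
(* in particular F(i-1,i+1) = c(i).  contp c i k = (F(i,i+k), F(i,i+k+1)). *)
Fixpoint contp (c : int -> R) (i : int) (k : nat) : R * R :=
  match k with
  | 0 => (0, 1)
  | k'.+1 => let: (a, b) := contp c i k' in (b, c (i + Posz k' + 1)%R * b - a)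
  end.

Definition frieze (c : int -> R) (i j : int) : R :=
  if (i <= j)%R then (contp c i (absz (j - i))).1 else 0.

Definition frieze_of (N : nat) (dg : rel nat) : int -> int -> R :=
  frieze (quiddity N dg).
End Frieze.

From HB Require Import structures.
From mathcomp Require Import all_boot all_order all_algebra.
From mathcomp Require Import reals trigo.
From mathcomp Require Import zify.
Import Order.TTheory GRing.Theory Num.Theory.

Set Implicit Arguments.
Unset Strict Implicit.
Unset Printing Implicit Defensive.

(* Write height p = m y - x for the p-th lattice point (x, y) of D, so that balance lines are
   level sets of the height.  Every up step k of D, starting at abscissa x_k and with balance
   line ending at (j, j'), cuts out an (m+2)-gon of rtn(D): its vertices are x_k, the abscissae
   of the first points of D after k at heights m-1, ..., 0 above k, and j+1.  Its sides are
   polygon edges or labels of balance lines, and no label separates its vertices, so it is a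
   piece of the dissection; distinct up steps give distinct pieces.  A vertex v lies in the
   pieces of the up steps starting at abscissa v, of the balance lines labelled (_, v), and of
   one more up step, so at least up_D(v) + bal_D(v) + 1 pieces of size m+2 contain v.
   Conversely a piece containing v is determined by its side leaving v clockwise, which is the
   edge (v, v+1) or one of the up_D(v) + bal_D(v) diagonals at v.  Hence mu_{m+2}(v) is
   up_D(v) + bal_D(v) + 1, every other mu_p(v) vanishes, and the quiddity entry F(i-1, i+1)
   is this multiple of lambda_{m+2}. *)

(** * Cyclic order on the vertices of P_N *)

Section CyclicOrder.
Variable N : nat.
Implicit Types a b c t : nat.

Lemma cdistE a b : a < N -> b < N ->
  cdist N a b = if a <= b then b - a else b + N - a.
Proof.
move=> aN bN; rewrite /cdist; case: leqP => ab; last by rewrite modn_small //; lia.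
have -> : b + N - a = (b - a) + N by lia.
by rewrite modnDr modn_small //; lia.
Qed.

Lemma cdist_lt a b : a < N -> b < N -> cdist N a b < N.
Proof. by move=> aN bN; rewrite cdistE //; case: (leqP a b); lia. Qed.

Lemma cdist_eq0 a b : a < N -> b < N -> (cdist N a b == 0) = (a == b).
Proof. by move=> aN bN; rewrite cdistE //; case: (leqP a b) => ab; apply/eqP/eqP; lia. Qed.

Lemma cdist_inj c a b : a < N -> b < N -> c < N ->
  cdist N c a = cdist N c b -> a = b.
Proof. by move=> aN bN cN; rewrite !cdistE //; case: (leqP c a); case: (leqP c b); lia. Qed.

Lemma cdist_cdist c a b : a < N -> b < N -> c < N ->
  cdist N (cdist N c a) (cdist N c b) = cdist N a b.
Proof.
move=> aN bN cN; rewrite [LHS]cdistE ?cdist_lt // !cdistE //.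
by case: (leqP c a); case: (leqP c b); case: (leqP a b) => *; case: leqP; lia.
Qed.

Lemma strictly_between_cdist c a b t : c < N -> a < N -> b < N -> t < N ->
  strictly_between N a b t =
  strictly_between N (cdist N c a) (cdist N c b) (cdist N c t).
Proof. by move=> cN aN bN tN; rewrite /strictly_between !cdist_cdist. Qed.

Lemma strictly_betweenE a b c : a < N -> b < N -> c < N ->
  strictly_between N a b c =
  ((a < b) && (a < c) && (c < b)) || ((b < a) && ((a < c) || (c < b))).
Proof.
move=> aN bN cN; rewrite /strictly_between !cdistE //.
by case: (leqP a b); case: (leqP a c); case: (ltngtP a b); case: (ltngtP a c);
  case: (ltngtP c b); lia.
Qed.

Lemma strictly_between_ltE a b c : a < b -> b < N -> c < N ->
  strictly_between N a b c = (a < c < b).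
Proof.
move=> ab bN cN; have aN := ltn_trans ab bN.
by rewrite strictly_betweenE // ab (leq_gtF (ltnW ab)) /= orbF.
Qed.

Lemma strictly_between_gtE a b c : b < a -> a < N -> c < N ->
  strictly_between N a b c = (a < c) || (c < b).
Proof.
move=> ba aN cN; have bN := ltn_trans ba aN.
by rewrite strictly_betweenE // ba (leq_gtF (ltnW ba)).
Qed.

Lemma strictly_between_succ a c : a < N -> c < N ->
  ~~ strictly_between N a (a.+1 %% N) c.
Proof.
move=> aN cN; have [aN'|] := ltnP a.+1 N.
  by rewrite strictly_betweenE ?modn_small //; lia.
move=> Na; have -> : a.+1 %% N = 0 by rewrite (_ : a.+1 = N) ?modnn //; lia.
by rewrite strictly_betweenE //; lia.
Qed.

Lemma strictly_between_total a b t : a < N -> b < N -> t < N ->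
  a != b -> t != a -> t != b ->
  strictly_between N a b t || strictly_between N b a t.
Proof.
move=> aN bN tN /eqP ab /eqP ta /eqP tb; rewrite !strictly_betweenE //.
by case: (ltngtP a b); case: (ltngtP a t); case: (ltngtP t b) => //=; lia.
Qed.

End CyclicOrder.

(** * Pieces of a dissection *)

Section Pieces.
Variables (N : nat) (dg : rel nat).
Implicit Types (S T : {set 'I_N}) (a b c t u v w : 'I_N).

Lemma is_sideP S a b :
  reflect [/\ a \in S, b \in S, a != b &
             forall c, c \in S -> ~~ strictly_between N a b c]
          (is_side S a b).
Proof.
apply: (iffP and4P) => [[aS bS ab /forall_inP]|[aS bS ab /forall_inP]] //.
Qed.

Lemma is_side_increasing (f : nat -> nat) K S a b :
  (forall s s', s < s' -> s' <= K -> f s < f s') -> (forall s, s <= K -> f s < N) ->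
  (forall w, reflect (exists2 s, s <= K & val w = f s) (w \in S)) ->
  is_side S a b ->
  (exists2 s, s < K & val a = f s /\ val b = f s.+1) \/ (val a = f K /\ val b = f 0).
Proof.
move=> f_lt f_ub memS /is_sideP [/memS [sa saK aE] /memS [sb sbK bE] ab noS].
have out s : s <= K -> ~~ strictly_between N (f sa) (f sb) (f s).
  by move=> sK; rewrite -aE -bE; apply: (noS (Ordinal (f_ub s sK))); apply/memS; exists s.
have sab : sa != sb by apply: contraNneq ab => e; apply/eqP/val_inj; rewrite aE bE e.
have sbE s : s <= K -> strictly_between N (f sa) (f sb) (f s) =
    ((f sa < f sb) && (f sa < f s) && (f s < f sb))
    || ((f sb < f sa) && ((f sa < f s) || (f s < f sb))).
  by move=> sK; rewrite strictly_betweenE ?f_ub.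
have [saK'|Ksa] := ltnP sa K.
  left; exists sa; rewrite // aE bE; split => //; congr f.
  case: (ltngtP sb sa.+1) => [sb_lt|sb_gt|//].
    have sb_sa : sb < sa by rewrite ltn_neqAle -ltnS sb_lt eq_sym sab.
    have := out K (leqnn K); rewrite sbE // (f_lt sb sa sb_sa (ltnW saK')).
    by rewrite (f_lt sa K saK' (leqnn K)) /= orbT.
  have := out sa.+1 saK'; rewrite sbE // (f_lt sa sb (ltnW sb_gt) sbK).
  by rewrite (f_lt sa sa.+1 (ltnSn sa) saK') (f_lt sa.+1 sb sb_gt sbK).
have saE : sa = K by apply/eqP; rewrite eqn_leq saK Ksa.
right; rewrite aE bE saE; split => //; congr f.
have [//|sb_gt0] := posnP sb; have sb_lt : sb < K by rewrite ltn_neqAle sbK andbT -saE eq_sym.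
have := out 0 (leq0n K); rewrite sbE // saE (f_lt sb K sb_lt (leqnn K)).
by rewrite (f_lt 0 sb sb_gt0 sbK) /= !orbT.
Qed.

Lemma exists_third T u v : 2 < #|T| -> exists2 t, t \in T & (t != u) && (t != v).
Proof.
move=> T_gt2; have : ~~ (T \subset [set u; v]).
  by apply: contraTN T_gt2 => /subset_leq_card; rewrite cards2; case: (u != v); lia.
by case/subsetPn => t tT; rewrite !inE negb_or; exists t.
Qed.

Lemma is_side_opposite T u v t : is_side T u v -> t \in T -> t != u -> t != v ->
  strictly_between N v u t.
Proof.
case/is_sideP=> _ _ uv noT tT tu tv.
have := strictly_between_total (ltn_ord u) (ltn_ord v) (ltn_ord t) uv tu tv.
by rewrite (negbTE (noT t tT)).
Qed.

Lemma is_side_not_pred T u v : 2 < #|T| -> is_side T u v ->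
  val u != (val v).+1 %% N.
Proof.
move=> T_gt2 uvT; have [t tT /andP [tu tv]] := exists_third u v T_gt2.
apply/eqP => uE; have := is_side_opposite uvT tT tu tv.
by rewrite uE (negbTE (strictly_between_succ (ltn_ord v) (ltn_ord t))).
Qed.

Lemma is_side_exists S v : v \in S -> 1 < #|S| -> exists w, is_side S v w.
Proof.
move=> vS S_gt1; have : 0 < #|S :\ v| by rewrite (cardsD1 v S) vS in S_gt1.
case/card_gt0P=> w0 w0S; have [w wS wmin] := arg_minnP (fun w : 'I_N => cdist N v w) w0S.
have /setD1P [wv wS'] := wS; exists w; apply/is_sideP.
split => //; first by rewrite eq_sym.
move=> c cS; rewrite /strictly_between.
apply/negP => /andP [vc cw]; have cv : c != v.
  by apply: contraTneq vc => ->; rewrite lt0n negbK cdist_eq0.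
have cSv : c \in S :\ v by rewrite in_setD1 cv cS.
by have := wmin c cSv; rewrite leqNgt cw.
Qed.

Lemma is_side_around T c : 1 < #|T| -> c \notin T ->
  exists u v, is_side T u v /\ strictly_between N u v c.
Proof.
move=> T_gt1 cT; have [t0 t0T] : exists t0, t0 \in T.
  by apply/card_gt0P; apply: ltnW.
pose r w := cdist N c w.
have r_lt w : r w < N by apply: cdist_lt.
have r_pos t : t \in T -> 0 < r t.
  by move=> tT; rewrite lt0n cdist_eq0 // val_eqE; apply: contraNneq cT => ->.
have r_inj w w' : r w = r w' -> w = w'.
  by move/cdist_inj => /(_ _ _ (ltn_ord c)) e; apply/val_inj/e.
have sbE w w' w'' : strictly_between N w w' w'' =
    ((r w < r w') && (r w < r w'') && (r w'' < r w'))
    || ((r w' < r w) && ((r w < r w'') || (r w'' < r w'))).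
  by rewrite (strictly_between_cdist (ltn_ord c)) // strictly_betweenE ?r_lt.
have r_c : r c = 0 by apply/eqP; rewrite cdist_eq0.
have [v vT vmin] := arg_minnP r t0T.
have [u uT umax] := arg_maxnP r t0T.
have r_range t : t \in T -> r v <= r t /\ r t <= r u.
  by move=> tT; split; [apply: vmin | apply: umax].
have vu : r v < r u.
  rewrite ltn_neqAle vmin // andbT; apply/negP => /eqP ruv.
  have : T \subset [set u].
    apply/subsetP => t tT; rewrite inE; apply/eqP/r_inj.
    by have [] := r_range t tT; rewrite ruv; lia.
  by move/subset_leq_card; rewrite cards1 leqNgt T_gt1.
exists u, v; split; last by rewrite sbE r_c; have := r_pos v vT; lia.
apply/is_sideP; split => // [|t tT]; first by apply: contraTneq vu => ->; rewrite ltnn.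
by rewrite sbE; have [] := r_range t tT; lia.
Qed.

Lemma piece_side_edge S u v : is_piece dg S -> is_side S u v ->
  (val v == (val u).+1 %% N) || dg u v.
Proof.
case/and3P=> S_gt2 /forallP sides _ uvS.
have := implyP (forallP (sides u) v) uvS; rewrite /boundary_edge -orbA.
by case/or3P => [-> //|/eqP uE|->]; [case/eqP: (is_side_not_pred S_gt2 uvS) | rewrite orbT].
Qed.

Lemma piece_not_cut S u v c w : is_piece dg S -> dg u v ->
  c \in S -> strictly_between N u v c -> w \in S -> ~~ strictly_between N v u w.
Proof.
case/and3P=> _ _ /forallP /(_ u) /forallP /(_ v) /implyP cut uv cS uvc wS.
by apply: contra (cut uv) => vuw; apply/exists_inP; exists c => //;
  apply/exists_inP; exists w; rewrite ?uvc.
Qed.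

Lemma piece_subset S T a b : is_piece dg S -> is_piece dg T ->
  is_side S a b -> is_side T a b -> S \subset T.
Proof.
move=> pS pT abS abT; apply/subsetP => c cS; apply/negPn/negP => cT.
have T_gt2 : 2 < #|T| by case/and3P: pT.
have [u [v [uvT uvc]]] := is_side_around (ltnW T_gt2) cT.
have dg_uv : dg u v.
  case/orP: (piece_side_edge pT uvT) => // /eqP vE.
  by move: uvc; rewrite vE (negbTE (strictly_between_succ (ltn_ord u) (ltn_ord c))).
have ST_uv t : t \in S -> t \in T -> (t == u) || (t == v).
  move=> tS tT; apply/negPn/negP; rewrite negb_or => /andP [tu tv].
  by have := piece_not_cut pS dg_uv cS uvc tS; rewrite (is_side_opposite uvT tT tu tv).
have [aS bS ab noS] := is_sideP _ _ _ abS.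
have [aT bT _ noT] := is_sideP _ _ _ abT.
case/orP: (ST_uv a aS aT) => /eqP aE; case/orP: (ST_uv b bS bT) => /eqP bE;
  rewrite aE bE ?eqxx in ab noS noT => //.
  by have := noS c cS; rewrite uvc.
have [t tT /andP [tu tv]] := exists_third u v T_gt2.
by have := noT t tT; rewrite (is_side_opposite uvT tT tu tv).
Qed.

Lemma piece_eq S T a b : is_piece dg S -> is_piece dg T ->
  is_side S a b -> is_side T a b -> S = T.
Proof.
move=> pS pT abS abT; apply/eqP; rewrite eqEsubset.
by rewrite (piece_subset pS pT abS abT) (piece_subset pT pS abT abS).
Qed.

Lemma card_ord_mem (s : seq nat) : #|[set w : 'I_N | val w \in s]| <= size s.
Proof.
apply: leq_trans (_ : #|pmap insub s : seq 'I_N| <= _).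
  by apply/subset_leq_card/subsetP => w; rewrite inE mem_pmap_sub.
by apply: leq_trans (card_size _) _; rewrite size_pmap_sub count_size.
Qed.

Lemma card_pieces_at v :
  #|[set S | is_piece dg S & v \in S]| <= #|[set w : 'I_N | dg v w]|.+1.
Proof.
set P := [set S | is_piece dg S & v \in S].
(* A piece containing v is determined by its side leaving v (piece_eq). *)
pose out S := odflt v [pick w | is_side S v w].
have outP S : is_piece dg S -> v \in S -> is_side S v (out S).
  move=> pS vS; have S_gt2 : 2 < #|S| by case/and3P: pS.
  have [w vwS] := is_side_exists vS (ltnW S_gt2).
  by rewrite /out; case: pickP => [//|/(_ w)]; rewrite vwS.
have out_inj : {in P &, injective out}.
  move=> S T; rewrite !inE => /andP [pS vS] /andP [pT vT] eST.
  by apply: (piece_eq pS pT (outP S pS vS)); rewrite eST; apply: outP.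
have outW : out @: P \subset
    [set w : 'I_N | val w \in [:: (val v).+1 %% N]] :|: [set w : 'I_N | dg v w].
  apply/subsetP => w /imsetP [S]; rewrite inE => /andP [pS vS] ->.
  by rewrite !inE (piece_side_edge pS (outP S pS vS)).
rewrite -(card_in_imset out_inj); apply: leq_trans (subset_leq_card outW) _.
apply: leq_trans (leq_card_setU _ _) _.
by rewrite -[X in _ <= X]add1n leq_add2r (card_ord_mem [:: _]).
Qed.

End Pieces.

(** * Heights and balance lines of an m-Dyck path *)

Section DyckPath.
Variables (m l : nat) (D : seq bool).
Hypotheses (m_gt0 : 0 < m) (l_gt0 : 0 < l) (D_dyck : is_mDyck m l D).

Local Notation n := (size D).
Local Notation is_up k := (nth false D k).
Local Notation x_at p := (n_right (take p D)).
Local Notation y_at p := (n_up (take p D)).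

Lemma x_at_add_y_at p : p <= n -> x_at p + y_at p = p.
Proof.
move=> pn; rewrite /n_right /n_up addnC.
by have := count_predC id (take p D); rewrite size_takel.
Qed.

Lemma x_atS p : p < n -> x_at p.+1 = x_at p + ~~ is_up p.
Proof. by move=> pn; rewrite (take_nth false pn) -cats1 /n_right count_cat /= addn0. Qed.

Lemma y_atS p : p < n -> y_at p.+1 = y_at p + is_up p.
Proof. by move=> pn; rewrite (take_nth false pn) -cats1 /n_up count_cat /= addn0. Qed.

Lemma x_at_mono : {homo (fun p => x_at p) : p q / p <= q}.
Proof. by move=> p q pq; rewrite /= -(subnKC pq) takeD /n_right count_cat leq_addr. Qed.

Lemma y_at_mono : {homo (fun p => y_at p) : p q / p <= q}.
Proof. by move=> p q pq; rewrite /= -(subnKC pq) takeD /n_up count_cat leq_addr. Qed.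

Lemma size_dyck : n = m * l + l.
Proof.
case/and3P: D_dyck => /eqP upD /eqP rightD _.
have := count_predC id D.
by rewrite -[count _ D]/(n_up D) upD -[count _ D]/(n_right D) rightD addnC.
Qed.

Lemma x_at_size : x_at n = m * l.
Proof. by rewrite take_size; case/and3P: D_dyck => _ /eqP. Qed.

Lemma x_at_le p : p <= n -> x_at p <= m * y_at p.
Proof.
by move=> pn; case/and3P: D_dyck => _ _ /allP; apply; rewrite mem_iota add0n ltnS.
Qed.

Definition height p : int := (Posz (m * y_at p) - Posz (x_at p))%R.

Lemma height_ge0 p : p <= n -> (0 <= height p)%R.
Proof. by move/x_at_le; rewrite /height; lia. Qed.

Lemma height0 : height 0 = 0%R.
Proof. by rewrite /height take0 /n_up /n_right /= muln0. Qed.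

Lemma height_size : height n = 0%R.
Proof.
rewrite /height x_at_size take_size; case/and3P: D_dyck => /eqP -> _ _; lia.
Qed.

Lemma heightS p : p < n ->
  height p.+1 = (height p + (if is_up p then Posz m else -1))%R.
Proof. by move=> pn; rewrite /height x_atS // y_atS //; case: (is_up p) => /=; lia. Qed.

Lemma up_first : is_up 0.
Proof.
have n_gt0 : 0 < n by rewrite size_dyck; nia.
by have := x_at_le n_gt0; rewrite x_atS // y_atS // take0; case: (is_up 0); rewrite ?muln0.
Qed.

Lemma find_up : find id D = 0.
Proof. by case: D up_first => //= b s ->. Qed.

Lemma valley_corner p : 0 < p -> p < n ->
  (height p <= height p.-1)%R -> (height p <= height p.+1)%R -> is_corner D p.
Proof.
move=> p_gt0 pn; have := heightS (ltac:(lia) : p.-1 < n); rewrite prednK // => hp.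
have := heightS pn; rewrite /is_corner p_gt0 pn.
by move: hp; case: (is_up p.-1); case: (is_up p) => //=; lia.
Qed.

Lemma level_line k p : k <= p -> p <= n -> height p = height k ->
  p = k + m.+1 * (y_at p - y_at k) /\ x_at p = x_at k + m * (y_at p - y_at k).
Proof.
move=> kp pn; rewrite /height => hpk.
have := x_at_add_y_at (leq_trans kp pn); have := x_at_add_y_at pn.
have := x_at_mono kp; have := y_at_mono kp; rewrite /= => ky kx sp sk.
have dx : x_at p - x_at k = m * (y_at p - y_at k) by rewrite mulnBr; lia.
by split; rewrite ?mulSn; lia.
Qed.

Lemma noncorner_on_line k t : k <= n ->
  noncorner_at D (x_at k + m * t) (y_at k + t) =
  [&& k + m.+1 * t <= n, height (k + m.+1 * t) == height k
    & ~~ is_corner D (k + m.+1 * t)].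
Proof.
move=> kn; rewrite /noncorner_at /on_path.
have -> : x_at k + m * t + (y_at k + t) = k + m.+1 * t.
  by have := x_at_add_y_at kn; rewrite mulSn; lia.
case pn: (k + m.+1 * t <= n) => //=; congr (_ && _).
have kp : k <= k + m.+1 * t by apply: leq_addr.
rewrite /pt xpair_eqE; apply/andP/eqP => [[/eqP ex /eqP ey]|hp].
  by rewrite /height ex ey; lia.
have [e1 e2] := level_line kp pn hp; have := y_at_mono kp; rewrite /= => ky.
have et : y_at (k + m.+1 * t) - y_at k = t.
  by apply/eqP; rewrite -(eqn_pmul2l (ltn0Sn m)); apply/eqP; lia.
by rewrite e2 et; split; apply/eqP; lia.
Qed.

Lemma pred_first_drop q r : is_up q -> q < r -> r <= n ->
  (height r < height q)%R -> (forall p, q < p -> p < r -> (height q <= height p)%R) ->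
  [/\ q < r.-1, ~~ is_up r.-1, height r.-1 = height q & ~~ is_corner D r.-1].
Proof.
move=> upq qr rn hr above.
have hq1 := heightS (leq_trans qr rn); rewrite upq in hq1.
have r_gt : q.+1 < r.
  suff : r != q.+1 by lia.
  by apply: contraTneq hr => ->; rewrite hq1; lia.
have [r' rE qr'] : exists2 r', r = r'.+2 & q <= r' by exists r.-2; lia.
subst r => /=; have hr1 := heightS rn; have hr2 := heightS (ltnW rn).
have ge1 := above r'.+1 (ltac:(lia)) (ltnSn _).
have r1_right : ~~ is_up r'.+1 by move: hr1 hr ge1; case: (is_up r'.+1) => //; lia.
have lev : height r'.+1 = height q by move: hr1 hr ge1; rewrite (negbTE r1_right); lia.
have {}qr' : q < r'.
  suff : r' != q by lia.
  by apply/eqP => r'E; move: lev; rewrite r'E hq1; lia.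
have r'_right : ~~ is_up r'.
  by move: hr2 lev (above r' qr' (ltac:(lia))); case: (is_up r') => //; lia.
split => //.
by rewrite /is_corner /= (negbTE r1_right) (negbTE r'_right) andbF.
Qed.

Lemma up_lt_size k : is_up k -> k < n.
Proof. by apply: contraTltn => /(nth_default false) ->. Qed.

Lemma first_below k p (h : int) : k < p -> (height p < h)%R ->
  exists r, [/\ k < r, r <= p, (height r < h)%R &
                forall q, k < q -> q < r -> (h <= height q)%R].
Proof.
move=> kp hp; pose P r := (k < r) && (height r < h)%R.
have [|r /andP [kr hr] rmin] := @ex_minnP P; first by exists p; rewrite /P kp.
exists r; split => //; first by apply: rmin; rewrite /P kp.
move=> q kq qr; rewrite leNgt; apply: contraTN qr => hq.
by rewrite -leqNgt rmin // /P kq.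
Qed.

Lemma level_noncorner_exists k : is_up k ->
  exists p, [/\ k < p, p <= n, height p = height k & ~~ is_corner D p].
Proof.
move=> upk; have kn := up_lt_size upk.
have [hn|hn] := lerP (height k) (height n).
  exists n; split => //; last by rewrite /is_corner ltnn andbF.
  by move: hn; rewrite height_size; have := height_ge0 (ltnW kn); lia.
have [r [kr rn hr above]] := first_below kn hn.
have [kr1 _ lev nc] := pred_first_drop upk kr rn hr above.
by exists r.-1; split => //; lia.
Qed.

(* Index along D of the point where the balance line of the up step k ends. *)
Definition bal_end k := k + m.+1 * bal_t m D k.

Lemma bal_end_spec k : is_up k ->
  [/\ k < bal_end k, bal_end k <= n, height (bal_end k) = height k,
      ~~ is_corner D (bal_end k) &
      forall p, k < p -> p < bal_end k -> height p = height k -> is_corner D p].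
Proof.
move=> upk; have kn := ltnW (up_lt_size upk).
pose P t := noncorner_at D (x_at k + m * t) (y_at k + t).
have bal_endE : bal_end k = k + m.+1 * (find P (iota 1 n)).+1 by [].
have [p0 [kp0 p0n h0 nc0]] := level_noncorner_exists upk.
have [p0E _] := level_line (ltnW kp0) p0n h0.
have P_p0 : P (y_at p0 - y_at k) by rewrite /P noncorner_on_line // -p0E p0n h0 eqxx.
have hasP : has P (iota 1 n).
  by apply/hasP; exists (y_at p0 - y_at k) => //; rewrite mem_iota; nia.
have jn : find P (iota 1 n) < n by rewrite -[X in _ < X](size_iota 1) -has_find.
have := nth_find 0 hasP; rewrite nth_iota // add1n.
rewrite /P noncorner_on_line // -bal_endE => /and3P [en /eqP he nce].
split => //; first by rewrite bal_endE; nia.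
move=> p kp pe hp; have [pE _] := level_line (ltnW kp) (leq_trans (ltnW pe) en) hp.
set t := y_at p - y_at k in pE.
have t_gt0 : 0 < t by move: kp; rewrite pE; case: (t) => //; rewrite muln0 addn0 ltnn.
have tj : t.-1 < find P (iota 1 n) by move: pe; rewrite bal_endE pE; nia.
have := before_find 0 tj; rewrite nth_iota; last by lia.
rewrite add1n prednK // /P noncorner_on_line // -pE (leq_trans (ltnW pe) en) hp eqxx /=.
by move/negbFE.
Qed.

Lemma bal_end_char k p : is_up k -> k < p -> p <= n -> height p = height k ->
  ~~ is_corner D p ->
  (forall q, k < q -> q < p -> height q = height k -> is_corner D q) -> bal_end k = p.
Proof.
move=> upk kp pn hp ncp pmin; have [ke en he nce emin] := bal_end_spec upk.
case: (ltngtP (bal_end k) p) => // lt.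
  by have := pmin _ ke lt he; rewrite (negbTE nce).
by have := emin _ kp lt hp; rewrite (negbTE ncp).
Qed.

Lemma bal_end_first_drop q r : is_up q -> q < r -> r <= n -> (height r < height q)%R ->
  (forall p, q < p -> p < r -> (height q <= height p)%R) ->
  bal_end q = r.-1 /\ ~~ is_up r.-1.
Proof.
move=> upq qr rn hr above.
have [qr1 r1_right lev nc] := pred_first_drop upq qr rn hr above.
split => //; apply: bal_end_char => //; first by lia.
move=> p qp pr1 hp; apply: valley_corner; rewrite ?hp; try lia.
  have [qp1|] := ltnP q p.-1; first by apply: above; lia.
  by move=> p1q; rewrite (_ : p.-1 = q) //; lia.
by apply: above; lia.
Qed.

Lemma bal_end_ge k p : is_up k -> k < p -> p <= bal_end k -> (height k <= height p)%R.
Proof.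
move=> upk kp pe; have [ke en _ _ _] := bal_end_spec upk.
rewrite leNgt; apply/negP => hp.
have [r [kr rp hr above]] := first_below kp hp.
have [] := bal_end_first_drop upk kr (leq_trans rp (leq_trans pe en)) hr above.
by lia.
Qed.

Lemma bal_end_lt_drop k p : is_up k -> k < p -> p <= n ->
  (height p < height k)%R -> bal_end k < p /\ (x_at (bal_end k)).+1 <= x_at p.
Proof.
move=> upk kp pn hp; have [r [kr rp hr above]] := first_below kp hp.
have [eE r1_right] := bal_end_first_drop upk kr (leq_trans rp pn) hr above.
have r_gt0 : 0 < r by lia.
split; first by lia.
have := x_atS (ltac:(lia) : r.-1 < n); rewrite prednK // (negbTE r1_right) addn1 -eE.
by move=> <-; apply: x_at_mono.
Qed.

Lemma bal_end_prev_right k : is_up k -> k < (bal_end k).-1 /\ ~~ is_up (bal_end k).-1.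
Proof.
move=> upk; have [ke en he _ _] := bal_end_spec upk.
have hk1 := heightS (up_lt_size upk); rewrite upk in hk1.
have k1 : k < (bal_end k).-1.
  suff : bal_end k != k.+1 by lia.
  by apply/eqP => eE; move: he; rewrite eE hk1; lia.
have ge := bal_end_ge upk k1 (leq_pred _).
have := heightS (ltac:(lia) : (bal_end k).-1 < n); rewrite prednK; last by lia.
by move=> hE; split => //; move: ge he hE; case: (is_up _) => //=; lia.
Qed.

Lemma bal_end_next_right k : is_up k -> bal_end k < n -> ~~ is_up (bal_end k).
Proof.
move=> upk en; have [ke _ _ nce _] := bal_end_spec upk.
have [_ prev_right] := bal_end_prev_right upk.
move: nce; rewrite /is_corner en (leq_ltn_trans _ ke) //= (negbTE prev_right).
by case: (is_up _).
Qed.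

Lemma x_at_after_bal_end k j : is_up k -> is_up j -> bal_end k <= j ->
  (x_at (bal_end k)).+1 <= x_at j.
Proof.
move=> upk upj ej; have jn := up_lt_size upj.
have en : bal_end k < n by lia.
have ej' : bal_end k < j.
  by rewrite ltn_neqAle ej andbT; apply: contraTneq upj => <-; apply: bal_end_next_right.
by have := x_atS en; rewrite (bal_end_next_right upk en) addn1 => <-; apply: x_at_mono.
Qed.

Lemma bal_end_nested_level k k' : is_up k -> is_up k' -> k < k' -> k' < bal_end k ->
  height k' = height k -> bal_end k' = bal_end k.
Proof.
move=> upk upk' kk' k'e hk'; have [ke en he nce emin] := bal_end_spec upk.
apply: bal_end_char; rewrite ?he ?hk' //.
by move=> q k'q qe hq; apply: emin; lia.
Qed.

Lemma bal_end_nested k k' : is_up k -> is_up k' -> k < k' -> k' < bal_end k ->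
  bal_end k' <= bal_end k.
Proof.
move=> upk upk' kk' k'e; have [ke en he _ _] := bal_end_spec upk.
have := bal_end_ge upk kk' (ltnW k'e); rewrite le_eqVlt => /orP [/eqP hk'|hk'].
  by rewrite (bal_end_nested_level upk upk' kk' k'e) // hk'.
have hlt : (height (bal_end k) < height k')%R by rewrite he.
by have [/ltnW] := bal_end_lt_drop upk' k'e en hlt.
Qed.

Lemma height_ivt a b (h : int) : a <= b -> b <= n ->
  (height b <= h)%R -> (h <= height a)%R -> exists p, [/\ a <= p, p <= b & height p = h].
Proof.
move=> ab bn hb ha; have [ha'|ha'] := eqVneq (height a) h; first by exists a.
have a_gt : (h < height a)%R by rewrite lt_neqAle eq_sym ha' ha.
have ab' : a < b by rewrite ltn_neqAle ab andbT; apply: contraTneq hb => <-; rewrite -ltNge.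
have [r [ar rb hr above]] := first_below ab' (ltac:(lia) : (height b < h + 1)%R).
have hr1 := heightS (ltac:(lia) : r.-1 < n); rewrite prednK in hr1; last by lia.
have ge : (h + 1 <= height r.-1)%R.
  have [ar1|] := ltnP a r.-1; first by apply: above; lia.
  by move=> r1a; rewrite (_ : r.-1 = a); lia.
by exists r; split; [lia | lia | move: hr1; case: (is_up _); lia].
Qed.

Lemma find_iota_first (P : pred nat) N p : p <= N -> P p ->
  let f := find P (iota 0 N.+1) in
  [/\ f <= p, P f & forall q, q < f -> ~~ P q].
Proof.
move=> pN Pp f; have hasP : has P (iota 0 N.+1) by apply/hasP; exists p; rewrite ?mem_iota.
have fN : f < N.+1 by rewrite -[X in _ < X](size_iota 0) -has_find.
have before q : q < f -> ~~ P q.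
  move=> qf; have qN : q < N.+1 := ltn_trans qf fN.
  by have := before_find 0 qf; rewrite nth_iota // add0n => ->.
split => //; last by have := nth_find 0 hasP; rewrite nth_iota.
by rewrite leqNgt; apply: contraTN Pp => /before.
Qed.

Definition level_hit k (L : nat) :=
  find (fun p => (k < p) && (height p == height k + Posz L)%R) (iota 0 n.+1).

Lemma level_hit_spec k L : is_up k -> L <= m ->
  [/\ k < level_hit k L, level_hit k L <= bal_end k,
      height (level_hit k L) = (height k + Posz L)%R &
      forall p, k < p -> p < level_hit k L -> (height k + Posz L < height p)%R].
Proof.
move=> upk Lm; have [ke en he _ _] := bal_end_spec upk.
have hk1 := heightS (up_lt_size upk); rewrite upk in hk1.
have hL0 : (height (bal_end k) <= height k + Posz L)%R by rewrite he; lia.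
have hL1 : (height k + Posz L <= height k.+1)%R by rewrite hk1; lia.
have [p [k1p pe hp]] := height_ivt (ke : k.+1 <= bal_end k) en hL0 hL1.
pose P q := (k < q) && (height q == height k + Posz L)%R.
have Pp : P p by rewrite /P k1p hp eqxx.
have := @find_iota_first P n p (leq_trans pe en) Pp.
rewrite -/(level_hit k L) => -[rp /andP [kr /eqP hr] rmin].
split => //; first exact: leq_trans rp pe.
move=> q kq qr; rewrite ltNge; apply/negP => hq.
have [q' [k1q' q'q hq']] := height_ivt (kq : k.+1 <= q) (ltac:(lia) : q <= n) hq hL1.
by have := rmin q' (leq_ltn_trans q'q qr); rewrite /P hq' eqxx andbT; lia.
Qed.

Lemma level_hit_char k L p : k < p -> p <= n -> height p = (height k + Posz L)%R ->
  (forall q, k < q -> q < p -> height q != (height k + Posz L)%R) -> level_hit k L = p.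
Proof.
move=> kp pn hp pmin; pose P q := (k < q) && (height q == height k + Posz L)%R.
have Pp : P p by rewrite /P kp hp eqxx.
have := @find_iota_first P n p pn Pp.
rewrite -/(level_hit k L) => -[rp /andP [kr /eqP hr] _].
apply/eqP; rewrite eqn_leq rp leqNgt; apply/negP => lt.
by have := pmin _ kr lt; rewrite hr eqxx.
Qed.

Lemma level_hit_top k : is_up k -> level_hit k m = k.+1.
Proof.
move=> upk; have kn := up_lt_size upk.
apply: level_hit_char => //; first by rewrite heightS // upk.
by move=> q kq qk; lia.
Qed.

Lemma level_hit_lt k L L' : is_up k -> L < L' -> L' <= m -> level_hit k L' < level_hit k L.
Proof.
move=> upk LL' L'm.
have [k1 _ h1 _] := level_hit_spec upk (ltnW (leq_trans LL' L'm)).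
have [_ _ h2 m2] := level_hit_spec upk L'm.
rewrite ltnNge leq_eqVlt negb_or; apply/andP; split.
  by apply/eqP => e; move: h1; rewrite e h2; lia.
by apply/negP => lt; have := m2 _ k1 lt; rewrite h1; lia.
Qed.

Lemma level_hit_prev_right k L : is_up k -> L < m ->
  [/\ k < (level_hit k L).-1, ~~ is_up (level_hit k L).-1 &
      x_at (level_hit k L) = (x_at (level_hit k L).-1).+1].
Proof.
move=> upk Lm; have [_ en _ _ _] := bal_end_spec upk.
have [kr re hr above] := level_hit_spec upk (ltnW Lm).
have hk1 := heightS (up_lt_size upk); rewrite upk in hk1.
have k1 : k < (level_hit k L).-1.
  suff : level_hit k L != k.+1 by lia.
  by apply/eqP => e; move: hr; rewrite e hk1; lia.
have rn : (level_hit k L).-1 < n by lia.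
have := above _ k1 (ltac:(lia)); have := heightS rn; have := x_atS rn.
rewrite !prednK; try lia.
by move: hr; case: (is_up _) => //= *; split => //; lia.
Qed.

(** * The pieces of rtn(D) *)

(* The vertices, in clockwise order, of the (m+2)-gon of the up step k: x_k (s = 0), the
   abscissa of the first point after k at height m - s above k (0 < s <= m), and j + 1. *)
Definition piece_vertex k s :=
  if s <= m then x_at (level_hit k (m - s)) else (x_at (bal_end k)).+1.

Lemma piece_vertex0 k : is_up k -> piece_vertex k 0 = x_at k.
Proof.
move=> upk; rewrite /piece_vertex leq0n subn0 level_hit_top //.
by rewrite x_atS ?up_lt_size // upk addn0.
Qed.

Lemma piece_vertex_last k : piece_vertex k m.+1 = (x_at (bal_end k)).+1.
Proof. by rewrite /piece_vertex ltnn. Qed.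

Lemma piece_vertex_ltS k s : is_up k -> s <= m -> piece_vertex k s < piece_vertex k s.+1.
Proof.
move=> upk sm; have [_ en _ _ _] := bal_end_spec upk.
rewrite /piece_vertex sm; case: (ltnP s m) => [sm'|ms].
  have [_ _ xr] := level_hit_prev_right upk (ltac:(lia) : m - s.+1 < m).
  have lt := level_hit_lt upk (ltac:(lia) : m - s.+1 < m - s) (leq_subr _ _).
  by rewrite xr ltnS; apply: x_at_mono; lia.
have [_ re _ _] := level_hit_spec upk (leq_subr s m).
by rewrite ltnS; apply: x_at_mono.
Qed.

Lemma piece_vertex_lt k s t : is_up k -> s < t -> t <= m.+1 ->
  piece_vertex k s < piece_vertex k t.
Proof.
move=> upk; elim: t => // t IH; rewrite ltnS leq_eqVlt => /orP [/eqP -> |st] tm.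
  by apply: piece_vertex_ltS.
by apply: ltn_trans (IH st (ltnW tm)) (piece_vertex_ltS upk _).
Qed.

Lemma piece_vertex_le k s t : is_up k -> s <= t -> t <= m.+1 ->
  piece_vertex k s <= piece_vertex k t.
Proof.
move=> upk; rewrite leq_eqVlt => /orP [/eqP -> //|st] tm.
exact/ltnW/piece_vertex_lt.
Qed.

Lemma piece_vertex_range k s : is_up k -> s <= m.+1 ->
  x_at k <= piece_vertex k s <= (x_at (bal_end k)).+1.
Proof.
move=> upk sm; rewrite -(piece_vertex0 upk) -piece_vertex_last.
by rewrite !piece_vertex_le.
Qed.

Lemma piece_vertex_ub k s : is_up k -> s <= m.+1 -> piece_vertex k s < m * l + 2.
Proof.
move=> upk sm; have [_ en _ _ _] := bal_end_spec upk.
have := x_at_mono en; rewrite /= x_at_size.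
by have /andP [_] := piece_vertex_range upk sm; lia.
Qed.

Lemma x_at_bal_end k : is_up k -> x_at (bal_end k) = x_at k + m * bal_t m D k.
Proof.
move=> upk; have [ke en he _ _] := bal_end_spec upk.
have [eE xE] := level_line (ltnW ke) en he; rewrite xE.
suff -> : y_at (bal_end k) - y_at k = bal_t m D k by [].
by apply/eqP; rewrite -(eqn_pmul2l (ltn0Sn m)); apply/eqP; move: eE; rewrite {1}/bal_end; lia.
Qed.

Lemma mem_nonfirst_ups k : (k \in nonfirst_ups D) = [&& is_up k, 0 < k & k < n].
Proof. by rewrite mem_filter find_up mem_iota /= andbA. Qed.

Lemma bal_labelE k : is_up k -> bal_label m D k = (x_at k, (x_at (bal_end k)).+1).
Proof. by move=> upk; rewrite /bal_label /pt /= x_at_bal_end. Qed.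

Lemma bal_labelsP lab : reflect
  (exists k, [/\ is_up k, 0 < k & lab = (x_at k, (x_at (bal_end k)).+1)])
  (lab \in bal_labels m D).
Proof.
apply: (iffP mapP) => [[k]|[k [upk k_gt0 ->]]].
  by rewrite mem_nonfirst_ups => /and3P [upk k_gt0 _] ->; exists k; rewrite bal_labelE.
by exists k; rewrite ?bal_labelE // mem_nonfirst_ups upk k_gt0 up_lt_size.
Qed.

Local Notation N := (m * l + 2).

Lemma boundary_edge_succ a : a.+1 < N -> boundary_edge N a a.+1.
Proof. by move=> aN; rewrite /boundary_edge modn_small // eqxx. Qed.

Lemma bal_end_first : bal_end 0 = n.
Proof.
have n_gt0 : 0 < n by rewrite size_dyck; nia.
apply: bal_end_char => //; rewrite ?up_first ?height0 ?height_size //.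
  by rewrite /is_corner ltnn andbF.
move=> p p_gt0 pn hp; apply: valley_corner; rewrite ?hp ?height_ge0 //; lia.
Qed.

Lemma piece_edge_mid k s : is_up k -> s < m ->
  rtn m D (piece_vertex k s) (piece_vertex k s.+1)
  || boundary_edge N (piece_vertex k s) (piece_vertex k s.+1).
Proof.
move=> upk sm; have [_ en he _ _] := bal_end_spec upk.
have -> : piece_vertex k s = x_at (level_hit k (m - s)) by rewrite /piece_vertex ltnW.
have -> : piece_vertex k s.+1 = x_at (level_hit k (m - s).-1).
  by rewrite /piece_vertex sm; congr (x_at (level_hit k _)); lia.
set L := m - s.
have [kq qe hq above_q] := level_hit_spec upk (leq_subr s m : L <= m).
have [kq' q'e hq' above_q'] := level_hit_spec upk (ltac:(lia) : L.-1 <= m).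
set q := level_hit k L in kq qe hq above_q *.
set q' := level_hit k L.-1 in kq' q'e hq' above_q' *.
have qq' : q < q' by apply: level_hit_lt => //; lia.
have qn : q < n.
  suff : q != bal_end k by lia.
  by apply/eqP => qE; move: hq; rewrite qE he; lia.
have [upq|rightq] := boolP (is_up q).
  apply/orP; left; apply/orP; left.
  have [eE r1_right] : bal_end q = q'.-1 /\ ~~ is_up q'.-1.
    apply: bal_end_first_drop => //; [exact: leq_trans q'e en | rewrite hq hq'; lia |].
    by move=> p qp pq'; rewrite hq; have := above_q' p (ltn_trans kq qp) pq'; lia.
  have [_ _ ->] := level_hit_prev_right upk (ltac:(lia) : L.-1 < m).
  by rewrite -eE; apply/bal_labelsP; exists q; split => //; lia.
apply/orP; right; have q'E : q' = q.+1.
  apply: level_hit_char; [lia | lia | by rewrite heightS // (negbTE rightq) hq; lia |].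
  move=> p kp pq1; have [pq|] := ltnP p q; first by have := above_q p kp pq; lia.
  by move=> qp; rewrite (_ : p = q) ?hq; lia.
have := x_at_mono (leq_trans q'e en); rewrite /= x_at_size q'E x_atS // (negbTE rightq) addn1.
by move=> ub; apply: boundary_edge_succ; lia.
Qed.

Lemma piece_edge_last k : is_up k ->
  rtn m D (piece_vertex k m) (piece_vertex k m.+1)
  || boundary_edge N (piece_vertex k m) (piece_vertex k m.+1).
Proof.
move=> upk; have [_ en _ _ emin] := bal_end_spec upk.
rewrite piece_vertex_last /piece_vertex leqnn subnn.
have [kq qe hq _] := level_hit_spec upk (leq0n m).
have [_ q1_right _] := level_hit_prev_right upk m_gt0.
move: qe; rewrite leq_eqVlt => /orP [/eqP -> | qe].
  apply/orP; right; apply: boundary_edge_succ.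
  by have := x_at_mono en; rewrite /= x_at_size; lia.
have [q_gt0 _ qstep] := and3P (emin _ kq qe (etrans hq (addr0 _))).
have upq : is_up (level_hit k 0) by move: qstep; rewrite (negbTE q1_right); case: (is_up _).
apply/orP; left; apply/orP; left; apply/bal_labelsP; exists (level_hit k 0); split => //.
by rewrite (bal_end_nested_level upk upq kq qe) // hq addr0.
Qed.

Lemma piece_edge k s : is_up k -> s <= m ->
  rtn m D (piece_vertex k s) (piece_vertex k s.+1)
  || boundary_edge N (piece_vertex k s) (piece_vertex k s.+1).
Proof.
move=> upk; rewrite leq_eqVlt => /orP [/eqP -> | sm]; first exact: piece_edge_last.
exact: piece_edge_mid.
Qed.

Lemma piece_edge_wrap k : is_up k ->
  rtn m D (piece_vertex k m.+1) (piece_vertex k 0)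
  || boundary_edge N (piece_vertex k m.+1) (piece_vertex k 0).
Proof.
move=> upk; rewrite piece_vertex_last piece_vertex0 //.
have [->|k_gt0] := posnP k.
  apply/orP; right; rewrite /boundary_edge bal_end_first x_at_size take0.
  by rewrite (_ : (m * l).+2 = N) ?modnn ?orbT //; lia.
by apply/orP; left; apply/orP; right; apply/bal_labelsP; exists k.
Qed.

Lemma piece_vertex_outside k k' s : is_up k -> is_up k' -> k < k' -> s <= m.+1 ->
  piece_vertex k s <= x_at k' \/ (x_at (bal_end k')).+1 <= piece_vertex k s.
Proof.
move=> upk upk' kk' sm; have [_ en _ _ _] := bal_end_spec upk.
have /andP [_ pv_ub] := piece_vertex_range upk sm.
have [ek'|k'e] := leqP (bal_end k) k'.
  by left; have := x_at_after_bal_end upk upk' ek'; lia.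
have [ms|{}sm] := ltnP m s.
  right; rewrite (_ : s = m.+1) ?piece_vertex_last ?ltnS; last by lia.
  exact/x_at_mono/bal_end_nested.
rewrite /piece_vertex sm; have [kq qe hq above] := level_hit_spec upk (leq_subr s m).
have [qk'|k'q] := leqP (level_hit k (m - s)) k'; first by left; apply: x_at_mono.
have hdrop : (height (level_hit k (m - s)) < height k')%R.
  by rewrite hq; have := above k' kk' k'q; lia.
by right; have [] := bal_end_lt_drop upk' k'q (leq_trans qe en) hdrop.
Qed.

Lemma piece_vertex_nocross k k' : is_up k -> is_up k' ->
  (forall s, s <= m.+1 ->
     piece_vertex k s <= x_at k' \/ (x_at (bal_end k')).+1 <= piece_vertex k s) \/
  (forall s, s <= m.+1 ->
     x_at k' <= piece_vertex k s /\ piece_vertex k s <= (x_at (bal_end k')).+1).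
Proof.
move=> upk upk'.
have range s : s <= m.+1 -> x_at k <= piece_vertex k s <= (x_at (bal_end k)).+1.
  exact: piece_vertex_range.
case: (ltngtP k k') => [kk'|k'k|<-]; first by left => s; apply: piece_vertex_outside.
- have [ek|ke] := leqP (bal_end k') k.
    left => s /range /andP [lb _]; right.
    by have := x_at_after_bal_end upk' upk ek; lia.
  right => s /range /andP [lb ub]; split; first by have := x_at_mono (ltnW k'k); lia.
  by have := x_at_mono (bal_end_nested upk' upk k'k ke); lia.
- by right => s /range /andP.
Qed.

Lemma bal_label_inj k k' : is_up k -> is_up k' -> x_at k = x_at k' ->
  x_at (bal_end k) = x_at (bal_end k') -> k = k'.
Proof.
have no_lt k1 k2 : is_up k1 -> is_up k2 -> k1 < k2 -> x_at k1 = x_at k2 ->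
    x_at (bal_end k1) = x_at (bal_end k2) -> False.
  move=> up1 up2 k12 xE eE; have [ke en he _ emin] := bal_end_spec up1.
  have [k2e|ek2] := ltnP k2 (bal_end k1); last first.
    by have := x_at_after_bal_end up1 up2 ek2; have := x_at_mono (ltnW ke); lia.
  have := bal_end_ge up1 k12 (ltnW k2e); rewrite le_eqVlt => /orP [/eqP h2|h2].
    have [k2_gt0 _ step] := and3P (emin _ k12 k2e (esym h2)).
    have right : ~~ is_up k2.-1 by move: step; rewrite up2; case: (is_up _).
    have := x_atS (ltac:(lia) : k2.-1 < n); rewrite prednK // (negbTE right) addn1.
    by have := x_at_mono (ltac:(lia) : k1 <= k2.-1); lia.
  have hdrop : (height (bal_end k1) < height k2)%R by rewrite he.
  by have [_] := bal_end_lt_drop up2 k2e en hdrop; lia.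
move=> upk upk' xE eE; case: (ltngtP k k') => // kk'.
  by case: (no_lt k k' upk upk' kk' xE eE).
by case: (no_lt k' k upk' upk kk' (esym xE) (esym eE)).
Qed.

Lemma right_step_to v : 0 < v -> v <= m * l ->
  exists p, [/\ 0 < p, p <= n, ~~ is_up p.-1 & x_at p = v].
Proof.
move=> v_gt0 vml; have [|p vp pmin] := @ex_minnP (fun p => v <= x_at p).
  by exists n; rewrite x_at_size.
have p_gt0 : 0 < p.
  by move: vp; rewrite lt0n; apply: contraTneq => ->; rewrite take0 /n_right /=; lia.
have pn : p <= n by apply: pmin; rewrite x_at_size.
have before : x_at p.-1 < v by rewrite ltnNge; apply: contraTN p_gt0 => /pmin; lia.
have := x_atS (ltac:(lia) : p.-1 < n); rewrite prednK // => xp.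
have right : ~~ is_up p.-1 by move: xp vp before; case: (is_up _) => /=; lia.
by exists p; split => //; move: xp vp before; rewrite right; lia.
Qed.

Lemma level_hit_exists p : 0 < p -> p <= n -> ~~ is_up p.-1 ->
  exists c L, [/\ is_up c, L < m & level_hit c L = p].
Proof.
move=> p_gt0 pn right; pose P j := (j < p) && (height j <= height p)%R.
have exP : exists j, P j by exists 0; rewrite /P p_gt0 height0 height_ge0.
have ubP j : P j -> j <= p by case/andP => /ltnW.
have [c /andP [cp hc] cmax] := ex_maxnP exP ubP.
have above j : c < j -> j < p -> (height p < height j)%R.
  move=> cj jp; rewrite ltNge; apply: contraTN cj => hj.
  by rewrite -leqNgt; apply: cmax; rewrite /P jp.
have hp1 := heightS (ltac:(lia) : p.-1 < n); rewrite prednK // (negbTE right) in hp1.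
have c_lt : c < p.-1.
  suff : c != p.-1 by lia.
  by apply/eqP => cE; move: hc; rewrite cE hp1; lia.
have hc1 := heightS (ltac:(lia) : c < n).
have upc : is_up c.
  by move: hc1 (above c.+1 (ltnSn c) (ltac:(lia))); case: (is_up c) => //; lia.
rewrite upc in hc1; have hc_le := above c.+1 (ltnSn c) (ltac:(lia)).
exists c, `|height p - height c|%N; split => //; first by move: hc1 hc_le hc; lia.
apply: level_hit_char => //; first by move: hc; lia.
by move=> j cj jp; have := above j cj jp; lia.
Qed.

Definition ups_at v := [seq k <- iota 0 n | [&& is_up k, 0 < k & x_at k == v]].

Definition bal_ends_at v :=
  [seq k <- iota 0 n | [&& is_up k, 0 < k & (x_at (bal_end k)).+1 == v]].

Lemma y_at_gt0 k : k <= n -> (0 < y_at k) = (0 < k).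
Proof.
move=> kn; have [->|k_gt0] := posnP k; first by rewrite take0.
have := y_at_mono k_gt0; rewrite /= y_atS ?take0 ?up_first; last by lia.
by rewrite /n_up /= add0n => ->.
Qed.

Lemma size_ups_at v : size (ups_at v) = up_D D v.
Proof.
rewrite /up_D size_filter; apply: eq_in_count => k; rewrite mem_iota /= => kn.
by rewrite /pt /= y_at_gt0 ?(ltnW kn) //; case: (is_up k); case: (0 < k); case: (_ == v).
Qed.

Lemma size_bal_ends_at v : size (bal_ends_at v) = bal_D m D v.
Proof.
rewrite /bal_D /bal_labels count_map count_filter size_filter.
apply: eq_in_count => k; rewrite mem_iota /= => kn; rewrite find_up.
by case upk: (is_up k); rewrite /= ?andbF // -x_at_bal_end // andbC.
Qed.

Lemma count_bal_labels_fst v :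
  count (fun lab : nat * nat => lab.1 == v) (bal_labels m D) = size (ups_at v).
Proof.
rewrite /bal_labels count_map count_filter size_filter.
apply: eq_in_count => k; rewrite mem_iota /= => kn; rewrite find_up.
by case: (is_up k); rewrite /= ?andbF // andbC.
Qed.

Lemma extra_piece_vertex v : v < N -> exists c,
  [/\ is_up c, exists2 s, s <= m.+1 & v = piece_vertex c s,
      c \notin ups_at v & c \notin bal_ends_at v].
Proof.
move=> vN; have first_out v' : 0 \notin [seq k <- iota 0 n | [&& is_up k, 0 < k & v' k]].
  by rewrite mem_filter ltnn andbF.
have [v0|v_gt0] := posnP v.
  exists 0; split; rewrite ?first_out ?up_first //.
  by exists 0; rewrite ?piece_vertex0 ?up_first ?take0.
have [mlv|vml] := ltnP (m * l) v.
  exists 0; split; rewrite ?first_out ?up_first //; exists m.+1 => //.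
  by rewrite piece_vertex_last bal_end_first x_at_size; lia.
have [p [p_gt0 pn right xp]] := right_step_to v_gt0 vml.
have [c [L [upc Lm pE]]] := level_hit_exists p_gt0 pn right.
have pvE : piece_vertex c (m - L) = v by rewrite /piece_vertex leq_subr subKn ?pE // ltnW.
have lt0 := piece_vertex_lt upc (ltac:(lia) : 0 < m - L) (ltac:(lia) : m - L <= m.+1).
have ltm := piece_vertex_lt upc (ltac:(lia) : m - L < m.+1) (leqnn _).
rewrite pvE piece_vertex0 // in lt0; rewrite pvE piece_vertex_last in ltm.
exists c; split => //; first by exists (m - L) => //; lia.
  by rewrite mem_filter negb_and; apply/orP; left; rewrite upc /=; apply/nandP; right; lia.
by rewrite mem_filter negb_and; apply/orP; left; rewrite upc /=; apply/nandP; right; lia.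
Qed.

Definition piece k : {set 'I_N} :=
  [set w | val w \in [seq piece_vertex k s | s <- iota 0 m.+2]].

Lemma mem_pieceP k w :
  reflect (exists2 s, s <= m.+1 & val w = piece_vertex k s) (w \in piece k).
Proof.
rewrite inE; apply: (iffP mapP) => [[s] | [s sm ->]]; last by exists s; rewrite ?mem_iota.
by rewrite mem_iota /= => sm ->; exists s.
Qed.

Lemma piece_vertex_in_piece k s (upk : is_up k) (sm : s <= m.+1) :
  Ordinal (piece_vertex_ub upk sm) \in piece k.
Proof. by apply/mem_pieceP; exists s. Qed.

Lemma card_piece k : is_up k -> #|piece k| = m.+2.
Proof.
move=> upk; set vs := [seq piece_vertex k s | s <- iota 0 m.+2].
have uniq_vs : uniq vs.
  rewrite map_inj_in_uniq ?iota_uniq // => s t; rewrite !mem_iota /= => sm tm e.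
  case: (ltngtP s t) => // lt.
    by have := piece_vertex_lt upk lt (ltac:(lia)); rewrite e ltnn.
  by have := piece_vertex_lt upk lt (ltac:(lia)); rewrite e ltnn.
have vs_ub : all (fun x => x < N) vs.
  by apply/allP => x /mapP [s]; rewrite mem_iota /= => sm ->; apply: piece_vertex_ub.
rewrite (@eq_card _ _ (mem (pmap insub vs : seq 'I_N))); last first.
  by move=> w; rewrite inE mem_pmap_sub.
rewrite (card_uniqP (pmap_sub_uniq _ uniq_vs)) size_pmap_sub.
by move: vs_ub; rewrite all_count => /eqP ->; rewrite size_map size_iota.
Qed.

Lemma piece_label_nocross k k' c d : is_up k -> is_up k' ->
  c \in piece k -> d \in piece k ->
  x_at k' < val c < (x_at (bal_end k')).+1 ->
  ((x_at (bal_end k')).+1 < val d) || (val d < x_at k') -> False.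
Proof.
move=> upk upk' /mem_pieceP [sc scm ->] /mem_pieceP [sd sdm ->] c_in d_out.
have [outside|inside] := piece_vertex_nocross upk upk'.
  by have := outside sc scm; lia.
by have := inside sd sdm; lia.
Qed.

Lemma piece_is_piece k : is_up k -> is_piece (rtn m D) (piece k).
Proof.
move=> upk; rewrite /is_piece card_piece // !ltnS m_gt0 /=; apply/andP; split.
  apply/forallP => a; apply/forallP => b; apply/implyP.
  have pv_lt s t : s < t -> t <= m.+1 -> piece_vertex k s < piece_vertex k t.
    exact: piece_vertex_lt.
  have pv_ub s : s <= m.+1 -> piece_vertex k s < N by apply: piece_vertex_ub.
  move/(is_side_increasing pv_lt pv_ub (mem_pieceP k)).
  case=> [[s sm [-> ->]] | [-> ->]]; rewrite orbC.
    exact: piece_edge.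
  exact: piece_edge_wrap.
apply/forallP => x; apply/forallP => y; apply/implyP => xy.
apply/exists_inP => -[c cS /exists_inP [d dS /andP [sc sd]]].
have lab_lt k' : is_up k' -> x_at k' < (x_at (bal_end k')).+1.
  by move=> upk'; have [/ltnW ke _ _ _ _] := bal_end_spec upk'; rewrite ltnS x_at_mono.
have xN := ltn_ord x; have yN := ltn_ord y.
case/orP: xy => /bal_labelsP [k' [upk' _ [xE yE]]]; have lohi := lab_lt k' upk';
  rewrite xE yE in xN yN sc sd.
  rewrite strictly_between_ltE // strictly_between_gtE // in sc sd.
  exact: piece_label_nocross upk upk' cS dS sc sd.
rewrite strictly_between_ltE // strictly_between_gtE // in sd sc.
exact: piece_label_nocross upk upk' dS cS sd sc.
Qed.

Lemma piece_inj k k' : is_up k -> is_up k' -> piece k = piece k' -> k = k'.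
Proof.
have ends k1 k2 : is_up k1 -> is_up k2 -> piece k1 = piece k2 ->
    x_at k2 <= x_at k1 /\ x_at (bal_end k1) <= x_at (bal_end k2).
  move=> up1 up2 E; split.
    have := piece_vertex_in_piece up1 (leq0n m.+1); rewrite E => /mem_pieceP [s sm /=].
    by rewrite piece_vertex0 // => ->; rewrite -(piece_vertex0 up2) piece_vertex_le.
  have := piece_vertex_in_piece up1 (leqnn m.+1); rewrite E => /mem_pieceP [s sm /=].
  by rewrite piece_vertex_last -ltnS => ->; rewrite -piece_vertex_last piece_vertex_le.
move=> upk upk' E; have [] := ends _ _ upk upk' E; have [] := ends _ _ upk' upk (esym E).
by move=> *; apply: bal_label_inj => //; lia.
Qed.

Lemma card_rtn_at (v : 'I_N) : #|[set w : 'I_N | rtn m D v w]| <= up_D D v + bal_D m D v.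
Proof.
set L := bal_labels m D.
have mem_snd (a b : nat) : ((a, b) \in L) = (b \in [seq lab.2 | lab <- L & lab.1 == a]).
  apply/idP/mapP => [ab|[[a' b'] /=]]; first by exists (a, b); rewrite // mem_filter eqxx.
  by rewrite mem_filter => /andP [/eqP <- ?] ->.
have mem_fst (a b : nat) : ((a, b) \in L) = (a \in [seq lab.1 | lab <- L & lab.2 == b]).
  apply/idP/mapP => [ab|[[a' b'] /=]]; first by exists (a, b); rewrite // mem_filter eqxx.
  by rewrite mem_filter => /andP [/eqP <- ?] ->.
have -> : [set w : 'I_N | rtn m D v w] =
    [set w : 'I_N | val w \in [seq lab.2 | lab <- L & lab.1 == val v]] :|:
    [set w : 'I_N | val w \in [seq lab.1 | lab <- L & lab.2 == val v]].
  by apply/setP => w; rewrite !inE /rtn -mem_snd -mem_fst.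
rewrite -size_ups_at -count_bal_labels_fst; apply: leq_trans (leq_card_setU _ _) _.
by apply: leq_add; apply: leq_trans (card_ord_mem _ _) _; rewrite size_map size_filter.
Qed.

Lemma card_pieces_of_size_at (v : 'I_N) : up_D D v + bal_D m D v + 1 <=
  #|[set S | is_piece (rtn m D) S & (#|S| == m.+2) && (v \in S)]|.
Proof.
have [c [upc [s sm vE] c_ups c_bals]] := extra_piece_vertex (ltn_ord v).
set K := ups_at v ++ bal_ends_at v ++ [:: c].
have K_up k : k \in K -> is_up k.
  by rewrite !mem_cat !mem_filter inE => /or3P [/andP [/and3P []]|/andP [/and3P []]|/eqP ->].
have K_v k : k \in K -> v \in piece k.
  rewrite !mem_cat !mem_filter inE => /or3P [/andP [/and3P [upk _ /eqP vE'] _]|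
    /andP [/and3P [upk _ /eqP vE'] _]|/eqP ->]; apply/mem_pieceP.
  - by exists 0; rewrite ?piece_vertex0.
  - by exists m.+1; rewrite ?piece_vertex_last.
  - by exists s.
have uniqK : uniq K.
  have uniqF (P : pred nat) : uniq [seq k <- iota 0 n | P k] by rewrite filter_uniq ?iota_uniq.
  rewrite /K cat_uniq cats1 rcons_uniq has_rcons c_bals !uniqF /= (negbTE c_ups) andbT.
  apply/hasPn => k; rewrite !mem_filter => /andP [/and3P [upk _ /eqP eE] _].
  apply/negP => /andP [/and3P [_ _ /eqP xE] _].
  by have [/ltnW ke _ _ _ _] := bal_end_spec upk; have := x_at_mono ke; lia.
have uniq_pieces : uniq (map piece K).
  by rewrite map_inj_in_uniq // => a b aK bK; apply: piece_inj; apply: K_up.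
have sizeK : size K = up_D D v + bal_D m D v + 1.
  by rewrite /K !size_cat size_ups_at size_bal_ends_at addnA addn1.
rewrite -sizeK -(size_map piece) -(card_uniqP uniq_pieces).
apply/subset_leq_card/subsetP => S /mapP [k kK ->].
by rewrite inE piece_is_piece ?K_up // card_piece ?K_up // eqxx K_v.
Qed.

Lemma mu_rtn i : i < N -> forall p,
  mu N (rtn m D) p i = if p == m.+2 then up_D D i + bal_D m D i + 1 else 0.
Proof.
move=> iN p; set v : 'I_N := Ordinal iN.
pose P q := [set S | is_piece (rtn m D) S & (#|S| == q) && (v \in S)].
have muE q : mu N (rtn m D) q i = #|P q|.
  apply: eq_card => S; rewrite !inE modn_small //; congr (_ && (_ && _)).
  apply/exists_inP/idP => [[x xS /eqP xE]|vS]; last by exists v.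
  by rewrite (_ : v = x) //; apply: val_inj.
set Pall := [set S | is_piece (rtn m D) S & v \in S].
have Pall_le : #|Pall| <= up_D D i + bal_D m D i + 1.
  by apply: leq_trans (card_pieces_at _ v) _; rewrite addn1 ltnS card_rtn_at.
have P_sub q : P q \subset Pall.
  by apply/subsetP => S; rewrite !inE => /andP [-> /andP [_ ->]].
have P_ge : up_D D i + bal_D m D i + 1 <= #|P m.+2| := card_pieces_of_size_at v.
rewrite muE; case: eqP => [->|pm].
  by apply/eqP; rewrite eqn_leq P_ge andbT (leq_trans (subset_leq_card (P_sub _)) Pall_le).
have disj : P m.+2 :&: P p = set0.
  apply/setP => S; rewrite !inE; apply/negP.
  move=> /andP [/andP [_ /andP [/eqP e1 _]] /andP [_ /andP [/eqP e2 _]]].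
  by apply: pm; rewrite -e2 e1.
have := subset_leq_card (setUSS (P_sub m.+2) (P_sub p)).
by rewrite setUid cardsU disj cards0 subn0; lia.
Qed.

End DyckPath.

(** * The quiddity row *)

Local Open Scope ring_scope.

Lemma frieze_quiddity (R : realType) (c : int -> R) (i : int) :
  frieze c (i - 1) (i + 1) = c i.
Proof.
rewrite /frieze (_ : i - 1 <= i + 1 = true); last by apply/idP; lia.
rewrite (_ : absz (i + 1 - (i - 1))%R = 2%N) /=; last by lia.
by rewrite mulr1 subr0 (_ : i - 1 + 0 + 1 = i) //; lia.
Qed.

Lemma quiddity_single (R : realType) N (dg : rel nat) (i q k : nat) :
  (i < N)%N -> (3 <= q <= N)%N ->
  (forall p, mu N dg p i = if p == q then k else 0%N) ->
  quiddity R N dg i = k%:R * lambda R q.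
Proof.
move=> iN qN muE; rewrite /quiddity modz_nat /= modn_small //.
rewrite (bigD1_seq q) /=; [|by rewrite mem_index_iota; lia | exact: iota_uniq].
by rewrite muE eqxx big1 ?addr0 // => p /negbTE pq; rewrite muE pq mul0r.
Qed.

Theorem proposition5p7 (R : realType) (m l : nat) (D : seq bool) :
  (0 < m)%N -> (0 < l)%N -> is_mDyck m l D ->
  forall i : nat, (i <= m * l + 1)%N ->
    frieze_of R (m * l + 2) (rtn m D) (i%:Z - 1) (i%:Z + 1)
    = (up_D D i + bal_D m D i + 1)%:R * lambda R (m + 2).
Proof.
move=> m_gt0 l_gt0 D_dyck i i_le.
have iN : (i < m * l + 2)%N by lia.
have qN : (3 <= m.+2 <= m * l + 2)%N by nia.
have muE := mu_rtn m_gt0 l_gt0 D_dyck iN.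
by rewrite /frieze_of frieze_quiddity (quiddity_single R iN qN muE) addn2.
Qed.
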